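(* Let $\Gamma$ be a group. In the category $\mathrm{Cr}\Gamma$ of crossed $\Gamma$-modules: (a) For every surjective morphism $f:(G',\mu')\to(G,\mu)$ and every morphism $h:F_{(L,\nu)}\to(G,\mu)$ from a free crossed $\Gamma$-module, there is a morphism $h':F_{(L,\nu)}\to(G',\mu')$ with $fh'=h$; consequently $\mathfrak P_\Gamma$ (retracts of free crossed $\Gamma$-modules), together with surjective morphisms, is a projective class in $\mathrm{Cr}\Gamma$. (b) For every surjective morphism $f:(G',\mu')\to(G,\mu)$ admitting a $\Gamma$-equivariant set-theoretic section and every morphism $h:F_{\Gamma(L,\nu)}\to(G,\mu)$ from a $\Gamma$-equivariant free crossed $\Gamma$-module, there is a morphism $h'$ with $fh'=h$; consequently $\mathfrak P_{\Gamma-e}$ (retracts of $\Gamma$-equivariant free crossed $\Gamma$-modules), together with surjective morphisms admitting $\Gamma$-equivariant set-theoretic sections, is a projective class in $\mathrm{Cr}\Gamma$.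
   Context: A crossed $\Gamma$-module $(G,\mu)$ is a group $G$ with an action of $\Gamma$ by automorphisms and a homomorphism $\mu:G\to\Gamma$ with $\mu({}^{\gamma}g)=\gamma\mu(g)\gamma^{-1}$ and ${}^{\mu(g)}g'=gg'g^{-1}$. Morphisms $(G,\mu)\to(G',\mu')$ are $\Gamma$-equivariant homomorphisms $f$ with $\mu'f=\mu$. Free crossed $\Gamma$-module on $(G,\mu)$: let $F(\Gamma\times G)$ be the free group on pairs $(\gamma,g)$ with $\Gamma$-action ${}^{\gamma'}(\gamma,g)=(\gamma'\gamma,g)$ and $\eta:F(\Gamma\times G)\to G$, $\eta(\gamma,g)={}^{\gamma}g$; $F_{(G,\mu)}$ is the quotient of $F(\Gamma\times G)$ by the normal subgroup generated by the Peiffer elements ${}^{\mu\eta(x)}x'\cdot x x'^{-1}x^{-1}$, with the crossed module map induced by $\mu\eta$; the canonical map $F_{(G,\mu)}\to(G,\mu)$ is surjective. $\Gamma$-equivariant free crossed $\Gamma$-module on $(G,\mu)$: let $F(G)$ be the free group on symbols $|g|$ with ${}^{\gamma}|g|=|{}^{\gamma}g|$, $\varphi:F(G)\to G$, $|g|\mapsto g$; $F_{\Gamma(G,\mu)}$ is the quotient of $F(G)$ by the normal subgroup generated by ${}^{\mu\varphi(x)}x'\cdot xx'^{-1}x^{-1}$, with crossed module map induced by $\mu\varphi$; the canonical surjection to $(G,\mu)$ has the $\Gamma$-equivariant section $g\mapsto[|g|]$. A projective class (in the sense of Eilenberg–Moore) is a class of objects $\mathfrak P$ together with a class of ''$\mathfrak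 P$-epimorphisms'' such that each object of $\mathfrak P$ has the lifting property against all $\mathfrak P$-epimorphisms, $\mathfrak P$ is closed under retracts, and every object receives a $\mathfrak P$-epimorphism from an object of $\mathfrak P$. *)

From Stdlib Require Import List Relations Setoid Morphisms.
From Stdlib Require Import ClassicalEpsilon FunctionalExtensionality
  PropExtensionality ProofIrrelevance.
Import ListNotations.
Set Implicit Arguments.
Unset Strict Implicit.

Record Group := {
  gcar :> Type;
  gmul : gcar -> gcar -> gcar;
  gone : gcar;
  ginv : gcar -> gcar;
  gmulA : forall x y z, gmul x (gmul y z) = gmul (gmul x y) z;
  gmul1g : forall x, gmul gone x = x;
  gmulg1 : forall x, gmul x gone = x;
  gmulVg : forall x, gmul (ginv x) x = gone;
  gmulgV : forall x, gmul x (ginv x) = gone }.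

Arguments gmul {g} _ _.
Arguments gone {g}.
Arguments ginv {g} _.

Lemma gmulKg (G : Group) (x y : G) : gmul (ginv x) (gmul x y) = y.
Proof. now rewrite gmulA, gmulVg, gmul1g. Qed.

Lemma ginv_uniq (G : Group) (x y : G) : gmul x y = gone -> y = ginv x.
Proof.
  intro H. rewrite <- (gmulKg x y), H. apply gmulg1.
Qed.

Lemma ginvK (G : Group) (x : G) : ginv (ginv x) = x.
Proof. symmetry. apply ginv_uniq, gmulVg. Qed.

Lemma ginvM (G : Group) (x y : G) : ginv (gmul x y) = gmul (ginv y) (ginv x).
Proof.
  symmetry. apply ginv_uniq.
  rewrite <- gmulA, (gmulA y), gmulgV, gmul1g. apply gmulgV.
Qed.

Lemma ghom1 (G H : Group) (f : G -> H) :
  (forall x y, f (gmul x y) = gmul (f x) (f y)) -> f gone = gone.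
Proof.
  intro Hf. pose proof (Hf gone gone) as E. rewrite gmul1g in E.
  rewrite <- (gmulKg (f gone) (f gone)), <- E. apply gmulVg.
Qed.

Lemma ghomV (G H : Group) (f : G -> H) :
  (forall x y, f (gmul x y) = gmul (f x) (f y)) -> forall x, f (ginv x) = ginv (f x).
Proof.
  intros Hf x. apply ginv_uniq. rewrite <- Hf, gmulgV. now apply ghom1.
Qed.

Record CrMod (Γ : Group) := {
  cm_grp :> Group;
  cm_act : Γ -> cm_grp -> cm_grp;
  cm_act1 : forall x, cm_act gone x = x;
  cm_actM : forall a b x, cm_act (gmul a b) x = cm_act a (cm_act b x);
  cm_act_mul : forall a x y, cm_act a (gmul x y) = gmul (cm_act a x) (cm_act a y);
  cm_mu : cm_grp -> Γ;
  cm_mu_mul : forall x y, cm_mu (gmul x y) = gmul (cm_mu x) (cm_mu y);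
  cm_mu_act : forall a x, cm_mu (cm_act a x) = gmul (gmul a (cm_mu x)) (ginv a);
  cm_peiffer : forall x y, cm_act (cm_mu x) y = gmul (gmul x y) (ginv x) }.

Arguments cm_act {Γ} c _ _.
Arguments cm_mu {Γ} c _.

Record CrHom (Γ : Group) (X Y : CrMod Γ) := {
  ch_fun :> X -> Y;
  ch_mul : forall x y, ch_fun (gmul x y) = gmul (ch_fun x) (ch_fun y);
  ch_act : forall a x, ch_fun (cm_act X a x) = cm_act Y a (ch_fun x);
  ch_mu : forall x, cm_mu Y (ch_fun x) = cm_mu X x }.

Definition surjective_hom (Γ : Group) (X Y : CrMod Γ) (f : CrHom X Y) : Prop :=
  forall y : Y, exists x : X, f x = y.

Definition has_equivariant_section (Γ : Group) (X Y : CrMod Γ) (f : CrHom X Y) : Prop :=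
  exists s : Y -> X, (forall y, f (s y) = y) /\
                     (forall (a : Γ) (y : Y), s (cm_act Y a y) = cm_act X a (s y)).

Definition is_retract (Γ : Group) (R P : CrMod Γ) : Prop :=
  exists (i : CrHom R P) (r : CrHom P R), forall x : R, r (i x) = x.

Definition projective_class (Γ : Group) (P : CrMod Γ -> Prop)
  (E : forall X Y : CrMod Γ, CrHom X Y -> Prop) : Prop :=
  (forall Q : CrMod Γ, P Q ->
     forall (X Y : CrMod Γ) (f : CrHom X Y), E X Y f ->
     forall h : CrHom Q Y, exists h' : CrHom Q X, forall q, f (h' q) = h q)
  /\ (forall Q R : CrMod Γ, P Q -> is_retract R Q -> P R)
  /\ (forall X : CrMod Γ, exists Q : CrMod Γ, P Q /\ exists f : CrHom Q X, E Q X f).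

Definition quot (T : Type) (R : T -> T -> Prop) : Type :=
  { P : T -> Prop | exists x, P = R x }.

Definition cls (T : Type) (R : T -> T -> Prop) (x : T) : quot R :=
  exist _ (R x) (ex_intro _ x eq_refl).

Definition repr (T : Type) (R : T -> T -> Prop) (q : quot R) : T :=
  proj1_sig (constructive_indefinite_description _ (proj2_sig q)).

Lemma cls_repr (T : Type) (R : T -> T -> Prop) (q : quot R) : cls R (repr q) = q.
Proof.
  unfold repr. destruct (constructive_indefinite_description _ _) as [x Hx].
  destruct q as [P HP]; simpl in *. subst P. unfold cls.
  f_equal. apply proof_irrelevance.
Qed.

Lemma quot_ind (T : Type) (R : T -> T -> Prop) (q : quot R) : exists x, q = cls R x.
Proof. exists (repr q). symmetry. apply cls_repr. Qed.

Lemma cls_eq (T : Type) (R : T -> T -> Prop) `{Equivalence T R} (x y : T) :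
  R x y -> cls R x = cls R y.
Proof.
  intro Hxy. unfold cls.
  assert (E : R x = R y).
  { apply functional_extensionality; intro z. apply propositional_extensionality.
    split; intro Hz; [ rewrite <- Hxy | rewrite Hxy ]; exact Hz. }
  revert Hxy. generalize (ex_intro (fun x0 => R x = R x0) x eq_refl).
  generalize (ex_intro (fun x0 => R y = R x0) y eq_refl).
  rewrite E. intros e1 e2 _. f_equal. apply proof_irrelevance.
Qed.

Lemma repr_cls (T : Type) (R : T -> T -> Prop) `{Equivalence T R} (x : T) :
  R (repr (cls R x)) x.
Proof.
  pose proof (cls_repr (cls R x)) as E.
  apply (f_equal (@proj1_sig _ _)) in E. unfold cls in E; simpl in E.
  unfold cls; rewrite E. reflexivity.
Qed.

(* The free crossed Γ-module on a Γ-equivariant map ε : S -> G         *)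
(*   F(S) / ⟨⟨ Peiffer elements ⟩⟩,  with crossed map induced by μ∘ε.   *)

Module FreeCr.
Section Construction.
Context (Γ : Group) (X : CrMod Γ) (S : Type) (sact : Γ -> S -> S)
  (sact1 : forall s, sact gone s = s)
  (sactM : forall a b s, sact (gmul a b) s = sact a (sact b s))
  (eps : S -> X) (eps_act : forall a s, eps (sact a s) = cm_act X a (eps s)).

(* words in the free group F(S): letters (s, true) = s, (s, false) = s⁻¹ *)
Definition word := list (S * bool).
Definition flip (p : S * bool) : S * bool := (fst p, negb (snd p)).
Definition winv (w : word) : word := rev (map flip w).
Definition wact (a : Γ) (w : word) : word := map (fun p => (sact a (fst p), snd p)) w.
Definition leval (p : S * bool) : X := if snd p then eps (fst p) else ginv (eps (fst p)).
Definition weta (w : word) : X := fold_right (fun p acc => gmul (leval p) acc) gone w.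
Definition wmu (w : word) : Γ := cm_mu X (weta w).
Definition peif (w w' : word) : word := wact (wmu w) w' ++ w ++ winv w' ++ winv w.

(* x x⁻¹ = 1 (free group relations) and Peiffer elements = 1, in any context;
   its equivalence closure is the congruence defining F(S)/⟨⟨Peiffer⟩⟩. *)
Inductive wstep : word -> word -> Prop :=
  | ws_cancel u x v : wstep (u ++ x :: flip x :: v) (u ++ v)
  | ws_peif u w w' v : wstep (u ++ peif w w' ++ v) (u ++ v).

Definition wequiv : word -> word -> Prop := clos_refl_sym_trans word wstep.

Global Instance wequiv_equiv : Equivalence wequiv.
Proof.
  split.
  - intro; apply rst_refl.
  - intros x y; apply rst_sym.
  - intros x y z; apply rst_trans.
Qed.

Lemma wstep_app (u v u' v' : word) : wstep u v -> wstep (u' ++ u ++ v') (u' ++ v ++ v').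
Proof.
  intros [u0 x v0|u0 w w' v0].
  - replace (u' ++ (u0 ++ x :: flip x :: v0) ++ v') with ((u' ++ u0) ++ x :: flip x :: (v0 ++ v'))
      by (now rewrite <- !app_assoc).
    replace (u' ++ (u0 ++ v0) ++ v') with ((u' ++ u0) ++ (v0 ++ v'))
      by (now rewrite <- !app_assoc).
    constructor.
  - replace (u' ++ (u0 ++ peif w w' ++ v0) ++ v') with ((u' ++ u0) ++ peif w w' ++ (v0 ++ v'))
      by (now rewrite <- !app_assoc).
    replace (u' ++ (u0 ++ v0) ++ v') with ((u' ++ u0) ++ (v0 ++ v'))
      by (now rewrite <- !app_assoc).
    constructor.
Qed.

Lemma wequiv_app (u v u' v' : word) : wequiv u v -> wequiv (u' ++ u ++ v') (u' ++ v ++ v').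
Proof.
  induction 1.
  - now apply rst_step, wstep_app.
  - reflexivity.
  - now symmetry.
  - etransitivity; eauto.
Qed.

Global Instance app_proper : Proper (wequiv ==> wequiv ==> wequiv) (@app (S * bool)).
Proof.
  intros u u' Hu v v' Hv. transitivity (u' ++ v).
  - pose proof (wequiv_app [] v Hu) as H; simpl in H. exact H.
  - pose proof (wequiv_app u' [] Hv) as H. now rewrite !app_nil_r in H.
Qed.

Lemma flipK p : flip (flip p) = p.
Proof. destruct p as [s []]; reflexivity. Qed.

Lemma winv_cons p w : winv (p :: w) = winv w ++ [flip p].
Proof. reflexivity. Qed.

Lemma winv_app u v : winv (u ++ v) = winv v ++ winv u.
Proof. unfold winv. now rewrite map_app, rev_app_distr. Qed.

Lemma winvK w : winv (winv w) = w.
Proof.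
  unfold winv. rewrite map_rev, rev_involutive, map_map.
  rewrite map_ext with (g := fun x => x) by apply flipK. apply map_id.
Qed.

Lemma cancel_eq x v : wequiv (x :: flip x :: v) v.
Proof. apply rst_step. exact (ws_cancel [] x v). Qed.

Lemma winv_l w : wequiv (winv w ++ w) [].
Proof.
  induction w as [|p w IH]; [reflexivity|].
  rewrite winv_cons, <- app_assoc. simpl.
  rewrite <- (flipK p) at 2. rewrite cancel_eq. exact IH.
Qed.

Lemma winv_r w : wequiv (w ++ winv w) [].
Proof. rewrite <- (winvK w) at 1. apply winv_l. Qed.

Lemma peif_eq w w' : wequiv (peif w w') [].
Proof. apply rst_step. pose proof (ws_peif [] w w' []) as H. now rewrite app_nil_r in H. Qed.

Lemma winv_trivial p : wequiv p [] -> wequiv (winv p) [].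
Proof.
  intro Hp. transitivity (winv p ++ p).
  - rewrite <- (app_nil_r (winv p)) at 1.
    apply app_proper; [reflexivity | symmetry; exact Hp].
  - apply winv_l.
Qed.

Global Instance winv_proper : Proper (wequiv ==> wequiv) winv.
Proof.
  intros u v H. induction H as [? ? [u0 x v0|u0 w w' v0]| | |].
  - rewrite !winv_app, winv_cons, winv_cons, flipK, <- !app_assoc. simpl.
    pose proof (cancel_eq x (winv u0)) as E. now rewrite E.
  - rewrite !winv_app, (winv_trivial (peif_eq w w')), app_nil_r. reflexivity.
  - reflexivity.
  - now symmetry.
  - etransitivity; eauto.
Qed.

Lemma weta_app u v : weta (u ++ v) = gmul (weta u) (weta v).
Proof.
  induction u as [|p u IH]; simpl.
  - now rewrite gmul1g.
  - now rewrite IH, gmulA.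
Qed.

Lemma leval_flip p : leval (flip p) = ginv (leval p).
Proof. destruct p as [s []]; unfold leval; simpl; [reflexivity| now rewrite ginvK]. Qed.

Lemma weta_inv w : weta (winv w) = ginv (weta w).
Proof.
  induction w as [|p w IH].
  - simpl. symmetry. symmetry. apply ginv_uniq, gmul1g.
  - rewrite winv_cons, weta_app, IH. simpl. rewrite gmulg1, leval_flip.
    now rewrite ginvM.
Qed.

Lemma act_one a : cm_act X a gone = gone.
Proof. apply (ghom1 (f := cm_act X a)), cm_act_mul. Qed.

Lemma act_inv a x : cm_act X a (ginv x) = ginv (cm_act X a x).
Proof. apply (ghomV (f := cm_act X a)), cm_act_mul. Qed.

Lemma weta_act a w : weta (wact a w) = cm_act X a (weta w).
Proof.
  induction w as [|[s b] w IH]; simpl.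
  - now rewrite act_one.
  - rewrite IH, cm_act_mul. f_equal. unfold leval; simpl.
    destruct b; rewrite eps_act; [reflexivity| now rewrite act_inv].
Qed.

Lemma weta_peif w w' : weta (peif w w') = gone.
Proof.
  unfold peif, wmu. rewrite !weta_app, weta_act, cm_peiffer, !weta_inv.
  set (g := weta w). set (g' := weta w').
  rewrite <- !gmulA, (gmulA (ginv g) g), gmulVg, gmul1g.
  rewrite (gmulA g' (ginv g')), gmulgV, gmul1g. apply gmulgV.
Qed.

Lemma weta_cons p w : weta (p :: w) = gmul (leval p) (weta w).
Proof. reflexivity. Qed.

Lemma weta_proper u v : wequiv u v -> weta u = weta v.
Proof.
  induction 1 as [u v []| | |]; try congruence.
  - rewrite !weta_app, !weta_cons, leval_flip, (gmulA (leval x)), gmulgV, gmul1g. reflexivity.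
  - rewrite !weta_app, weta_peif, gmul1g. reflexivity.
Qed.

Lemma wact_app a u v : wact a (u ++ v) = wact a u ++ wact a v.
Proof. apply map_app. Qed.

Lemma wact_inv a w : wact a (winv w) = winv (wact a w).
Proof. unfold wact, winv. rewrite map_rev, !map_map. reflexivity. Qed.

Lemma wactM a b w : wact (gmul a b) w = wact a (wact b w).
Proof.
  unfold wact. rewrite map_map. apply map_ext. intros [s c]. simpl. now rewrite sactM.
Qed.

Lemma wact1 w : wact gone w = w.
Proof.
  unfold wact. rewrite map_ext with (g := fun x => x). apply map_id.
  intros [s c]; simpl; now rewrite sact1.
Qed.

Lemma wmu_act a w : wmu (wact a w) = gmul (gmul a (wmu w)) (ginv a).
Proof. unfold wmu. now rewrite weta_act, cm_mu_act. Qed.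

Lemma wact_peif a w w' : wact a (peif w w') = peif (wact a w) (wact a w').
Proof.
  unfold peif. rewrite !wact_app, !wact_inv, wmu_act, <- !wactM.
  rewrite <- gmulA, gmulVg, gmulg1. reflexivity.
Qed.

Global Instance wact_proper a : Proper (wequiv ==> wequiv) (wact a).
Proof.
  intros u v H. induction H as [? ? [u0 x v0|u0 w w' v0]| | |].
  - rewrite !wact_app. simpl. apply rst_step. destruct x as [s b]; exact (ws_cancel _ (sact a s, b) _).
  - rewrite !wact_app, wact_peif. apply rst_step, ws_peif.
  - reflexivity.
  - now symmetry.
  - etransitivity; eauto.
Qed.

Definition car : Type := quot wequiv.
Definition c (w : word) : car := cls wequiv w.
Definition r (q : car) : word := repr q.
Definition qmul (p q : car) : car := c (r p ++ r q).
Definition qone : car := c [].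
Definition qinv (q : car) : car := c (winv (r q)).
Definition qact (a : Γ) (q : car) : car := c (wact a (r q)).
Definition qmu (q : car) : Γ := wmu (r q).

Lemma ceq u v : wequiv u v -> c u = c v.
Proof. exact (@cls_eq _ wequiv _ u v). Qed.

Lemma rc w : wequiv (r (c w)) w.
Proof. exact (@repr_cls _ wequiv _ w). Qed.

Lemma qmulE u v : qmul (c u) (c v) = c (u ++ v).
Proof. unfold qmul. apply ceq. now rewrite !rc. Qed.
Lemma qinvE u : qinv (c u) = c (winv u).
Proof. unfold qinv. apply ceq. now rewrite rc. Qed.
Lemma qactE a u : qact a (c u) = c (wact a u).
Proof. unfold qact. apply ceq. now rewrite rc. Qed.
Lemma qmuE u : qmu (c u) = wmu u.
Proof. unfold qmu, wmu. f_equal. apply weta_proper, rc. Qed.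

Lemma cind (P : car -> Prop) : (forall w, P (c w)) -> forall q, P q.
Proof. intros H q. destruct (quot_ind q) as [w ->]. apply H. Qed.

Definition grp : Group.
Proof.
  refine {| gcar := car; gmul := qmul; gone := qone; ginv := qinv |}.
  - intros x y z. revert x. apply cind; intro u. revert y. apply cind; intro v.
    revert z. apply cind; intro w. rewrite !qmulE. now rewrite app_assoc.
  - apply cind; intro u. unfold qone. now rewrite qmulE.
  - apply cind; intro u. unfold qone. rewrite qmulE. now rewrite app_nil_r.
  - apply cind; intro u. rewrite qinvE, qmulE. apply ceq, winv_l.
  - apply cind; intro u. rewrite qinvE, qmulE. apply ceq, winv_r.
Defined.

Definition cr : CrMod Γ.
Proof.
  refine {| cm_grp := grp; cm_act := qact; cm_mu := qmu |}; simpl.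
  - apply cind; intro u. rewrite qactE. now rewrite wact1.
  - intros a b. apply cind; intro u. rewrite !qactE, wactM. reflexivity.
  - intros a x y. revert x. apply cind; intro u. revert y. apply cind; intro v.
    rewrite qmulE, !qactE, qmulE. now rewrite wact_app.
  - intros x y. revert x. apply cind; intro u. revert y. apply cind; intro v.
    rewrite qmulE, !qmuE. unfold wmu. now rewrite weta_app, cm_mu_mul.
  - intros a. apply cind; intro u. rewrite qactE, !qmuE. apply wmu_act.
  - intros x y. revert x. apply cind; intro u. revert y. apply cind; intro v.
    rewrite qmuE, qactE, qinvE, !qmulE. apply ceq.
    set (A := wact (wmu u) v).
    transitivity (A ++ (u ++ winv v ++ winv u) ++ (u ++ v ++ winv u)).
    + assert (E : wequiv ((u ++ winv v ++ winv u) ++ (u ++ v ++ winv u)) []).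
      { rewrite <- !app_assoc, (app_assoc (winv u) u), winv_l. simpl.
        rewrite (app_assoc (winv v) v), winv_l. simpl. apply winv_r. }
      rewrite E, app_nil_r. reflexivity.
    + rewrite app_assoc. pose proof (peif_eq u v) as E. unfold peif in E.
      fold A in E. rewrite E. simpl. now rewrite app_assoc.
Defined.

End Construction.
End FreeCr.

(* F_(L,ν): the free crossed Γ-module on (L, ν), built on F(Γ × L) with
   γ'·(γ, g) = (γ'γ, g) and η(γ, g) = γ·g. *)
Definition free_cr (Γ : Group) (L : CrMod Γ) : CrMod Γ.
Proof.
  refine (@FreeCr.cr Γ L (gcar Γ * gcar L) (fun a p => (gmul a (fst p), snd p)) _ _
            (fun p => cm_act L (fst p) (snd p)) _).
  - intros [g l]; simpl. now rewrite gmul1g.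
  - intros a b [g l]; simpl. now rewrite gmulA.
  - intros a [g l]; simpl. apply cm_actM.
Defined.

(* F_Γ(L,ν): the Γ-equivariant free crossed Γ-module on (L, ν), built on F(L)
   with γ·|g| = |γ·g| and φ(|g|) = g. *)
Definition efree_cr (Γ : Group) (L : CrMod Γ) : CrMod Γ.
Proof.
  refine (@FreeCr.cr Γ L (gcar L) (cm_act L) _ _ (fun x => x) _).
  - apply cm_act1.
  - apply cm_actM.
  - reflexivity.
Defined.

(* Both F_(L,ν) and F_Γ(L,ν) are instances of one construction, the free
   crossed module F on a Γ-equivariant map ε : S -> X (a quotient of the free
   group on S).  Everything rests on its universal property: a Γ-equivariant
   map ψ : S -> Y with μ_Y ∘ ψ = μ_X ∘ ε extends to a morphism F -> Y (by
   evaluating words), and a morphism out of F is determined by its values on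
   the generators.  Consequently a morphism h : F -> X lifts along
   f : X' -> X as soon as h ∘ gen lifts to a Γ-equivariant map ψ : S -> X';
   the compatibility with μ is then automatic.  For F_(L,ν) such a ψ is
   (γ, l) ↦ γ·x_l with f x_l = h(gen(1, l)), which only needs f surjective;
   for F_Γ(L,ν) it is σ ∘ h ∘ gen for a Γ-equivariant section σ of f.
   The projective-class axioms then follow formally: retracts inherit the
   lifting property, and the counit F(X) -> X (which has the equivariant
   section x ↦ gen x in the equivariant case) covers every object. *)
From Stdlib Require Import List Relations ClassicalEpsilon FunctionalExtensionality.
Import ListNotations.
Set Implicit Arguments.
Unset Strict Implicit.

Definition comp_hom (Γ : Group) (A B C : CrMod Γ) (g : CrHom B C) (f : CrHom A B) :
  CrHom A C.
Proof.
  refine {| ch_fun := fun x => g (f x) |}.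
  - intros x y. now rewrite !ch_mul.
  - intros a x. now rewrite !ch_act.
  - intros x. now rewrite !ch_mu.
Defined.

Definition id_hom (Γ : Group) (A : CrMod Γ) : CrHom A A.
Proof. refine {| ch_fun := fun x => x |}; reflexivity. Defined.

Lemma surjective_section (A B : Type) (f : A -> B) :
  (forall b, exists a, f a = b) -> exists s : B -> A, forall b, f (s b) = b.
Proof.
  intro Hf. exists (fun b => proj1_sig (constructive_indefinite_description _ (Hf b))).
  intro b. exact (proj2_sig (constructive_indefinite_description _ (Hf b))).
Qed.

Section FreeCrossedModule.
Variables (Γ : Group) (X : CrMod Γ) (S : Type) (sact : Γ -> S -> S).
Hypothesis sact1 : forall s, sact gone s = s.
Hypothesis sactM : forall a b s, sact (gmul a b) s = sact a (sact b s).
Variable eps : S -> X.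
Hypothesis eps_act : forall a s, eps (sact a s) = cm_act X a (eps s).

Local Notation F := (FreeCr.cr sact1 sactM eps_act).
Local Notation cls := (FreeCr.c sact eps).

Definition gen (s : S) : F := cls [(s, true)].

Lemma gen_act a s : cm_act F a (gen s) = gen (sact a s).
Proof. now apply FreeCr.qactE. Qed.

Lemma gen_mu s : cm_mu F (gen s) = cm_mu X (eps s).
Proof.
  unfold gen; simpl. rewrite FreeCr.qmuE by assumption.
  unfold FreeCr.wmu; simpl. now rewrite gmulg1.
Qed.

Lemma hom_on_words (Y : CrMod Γ) (h : CrHom F Y) (w : FreeCr.word S) :
  h (cls w) = FreeCr.weta (fun s => h (gen s)) w.
Proof.
  induction w as [|[s b] w IH]; simpl.
  - apply (ghom1 (f := h)), ch_mul.
  - rewrite <- IH.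
    assert (E : cls ((s, b) :: w) = @gmul F (cls [(s, b)]) (cls w)).
    { symmetry. apply FreeCr.qmulE. }
    rewrite E, ch_mul. f_equal. unfold FreeCr.leval; simpl. destruct b; [reflexivity|].
    rewrite <- (ghomV (f := h)) by apply ch_mul. f_equal. symmetry. apply FreeCr.qinvE.
Qed.

Lemma hom_ext (Y : CrMod Γ) (h1 h2 : CrHom F Y) :
  (forall s, h1 (gen s) = h2 (gen s)) -> forall q, h1 q = h2 q.
Proof.
  intro H. apply FreeCr.cind; intro w. rewrite !hom_on_words. f_equal.
  apply functional_extensionality; exact H.
Qed.

Section Extension.
Variables (Y : CrMod Γ) (psi : S -> Y).
Hypothesis psi_act : forall a s, psi (sact a s) = cm_act Y a (psi s).
Hypothesis psi_mu : forall s, cm_mu Y (psi s) = cm_mu X (eps s).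

Lemma wmu_compat (w : FreeCr.word S) : FreeCr.wmu psi w = FreeCr.wmu eps w.
Proof.
  unfold FreeCr.wmu. induction w as [|[s b] w IH]; simpl.
  - rewrite (ghom1 (f := cm_mu Y)) by apply cm_mu_mul.
    symmetry; apply (ghom1 (f := cm_mu X)), cm_mu_mul.
  - rewrite !cm_mu_mul, IH. f_equal. unfold FreeCr.leval; simpl. destruct b.
    + apply psi_mu.
    + rewrite (ghomV (f := cm_mu Y)) by apply cm_mu_mul.
      rewrite (ghomV (f := cm_mu X)) by apply cm_mu_mul. now rewrite psi_mu.
Qed.

(* Hence the Peiffer relations for ε are Peiffer relations for ψ, and word
   evaluation through ψ is constant on the classes defining F. *)
Lemma weta_invariant (u v : FreeCr.word S) :
  FreeCr.wequiv sact eps u v -> FreeCr.weta psi u = FreeCr.weta psi v.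
Proof.
  intro Huv. apply (FreeCr.weta_proper psi_act).
  induction Huv as [u v Hstep| | |]; [|reflexivity|now symmetry|etransitivity; eauto].
  apply rst_step. destruct Hstep as [u0 x v0|u0 w w' v0]; [constructor|].
  assert (E : FreeCr.peif sact eps w w' = FreeCr.peif sact psi w w').
  { unfold FreeCr.peif. now rewrite wmu_compat. }
  rewrite E. constructor.
Qed.

Definition extension_fun (q : F) : Y := FreeCr.weta psi (FreeCr.r q).

Lemma extension_cls w : extension_fun (cls w) = FreeCr.weta psi w.
Proof. apply weta_invariant, FreeCr.rc. Qed.

Definition extension : CrHom F Y.
Proof.
  refine {| ch_fun := extension_fun |}.
  - intros x y. revert x. apply FreeCr.cind; intro u. revert y. apply FreeCr.cind; intro v.
    change (extension_fun (FreeCr.qmul (cls u) (cls v)) =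
            gmul (extension_fun (cls u)) (extension_fun (cls v))).
    rewrite FreeCr.qmulE by assumption. rewrite !extension_cls. apply FreeCr.weta_app.
  - intro a. apply FreeCr.cind; intro u.
    change (extension_fun (FreeCr.qact a (cls u)) = cm_act Y a (extension_fun (cls u))).
    rewrite FreeCr.qactE by assumption. rewrite !extension_cls.
    exact (FreeCr.weta_act psi_act a u).
  - apply FreeCr.cind; intro u.
    change (cm_mu Y (extension_fun (cls u)) = FreeCr.qmu (cls u)).
    rewrite extension_cls, FreeCr.qmuE by assumption. apply wmu_compat.
Defined.

Lemma extension_gen s : extension (gen s) = psi s.
Proof. change (extension_fun (gen s) = psi s). unfold gen. rewrite extension_cls. apply gmulg1. Qed.

End Extension.

Lemma lift_from_generators (Y' Y : CrMod Γ) (f : CrHom Y' Y) (h : CrHom F Y)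
  (psi : S -> Y') (psi_act : forall a s, psi (sact a s) = cm_act Y' a (psi s))
  (psi_lift : forall s, f (psi s) = h (gen s)) :
  exists h' : CrHom F Y', forall x, f (h' x) = h x.
Proof.
  assert (psi_mu : forall s, cm_mu Y' (psi s) = cm_mu X (eps s)).
  { intro s. now rewrite <- (ch_mu f), psi_lift, ch_mu, gen_mu. }
  exists (extension psi_act psi_mu).
  apply (hom_ext (h1 := comp_hom f (extension psi_act psi_mu))).
  intro s. exact (eq_trans (f_equal f (extension_gen psi_act psi_mu s)) (psi_lift s)).
Qed.

End FreeCrossedModule.

Definition free_gen (Γ : Group) (L : CrMod Γ) (p : Γ * L) : free_cr L := gen _ _ _ p.
Definition efree_gen (Γ : Group) (L : CrMod Γ) (l : L) : efree_cr L := gen _ _ _ l.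

Lemma free_gen_act (Γ : Group) (L : CrMod Γ) (a g : Γ) (l : L) :
  cm_act (free_cr L) a (free_gen (g, l)) = free_gen (gmul a g, l).
Proof. exact (gen_act _ _ _ a (g, l)). Qed.

Lemma efree_gen_act (Γ : Group) (L : CrMod Γ) (a : Γ) (l : L) :
  cm_act (efree_cr L) a (efree_gen l) = efree_gen (cm_act L a l).
Proof. exact (gen_act _ _ _ a l). Qed.

Lemma free_lift (Γ : Group) (X' X : CrMod Γ) (f : CrHom X' X) :
  surjective_hom f -> forall (L : CrMod Γ) (h : CrHom (free_cr L) X),
  exists h' : CrHom (free_cr L) X', forall x, f (h' x) = h x.
Proof.
  intros Hf L h.
  destruct (surjective_section Hf) as [sec Hsec].
  apply (lift_from_generators
           (psi := fun p => cm_act X' (fst p) (sec (h (free_gen (gone, snd p)))))).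
  - intros a [g l]. apply cm_actM.
  - intros [g l]. simpl. rewrite ch_act, Hsec, <- ch_act, free_gen_act.
    now rewrite gmulg1.
Qed.

(* (b) Γ-equivariant free crossed Γ-modules lift against every morphism with a
   Γ-equivariant section (surjectivity is then automatic). *)
Lemma efree_lift (Γ : Group) (X' X : CrMod Γ) (f : CrHom X' X) :
  has_equivariant_section f -> forall (L : CrMod Γ) (h : CrHom (efree_cr L) X),
  exists h' : CrHom (efree_cr L) X', forall x, f (h' x) = h x.
Proof.
  intros [sec [Hsec Hsec_act]] L h.
  apply (lift_from_generators (psi := fun l => sec (h (efree_gen l)))).
  - intros a l. now rewrite <- Hsec_act, <- ch_act, efree_gen_act.
  - intro l. apply Hsec.
Qed.

Lemma free_cover (Γ : Group) (X : CrMod Γ) :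
  exists f : CrHom (free_cr X) X, surjective_hom f.
Proof.
  pose (act := fun p : Γ * X => cm_act X (fst p) (snd p)).
  assert (act_act : forall a p, act (gmul a (fst p), snd p) = cm_act X a (act p)).
  { intros a [g x]. apply cm_actM. }
  pose (f := extension _ _ _ (psi := act) act_act (fun _ => eq_refl)
             : CrHom (free_cr X) X).
  exists f. intro x. exists (free_gen (gone, x)).
  transitivity (act (gone, x)); [apply extension_gen | apply cm_act1].
Qed.

Lemma efree_cover (Γ : Group) (X : CrMod Γ) :
  exists f : CrHom (efree_cr X) X, surjective_hom f /\ has_equivariant_section f.
Proof.
  pose (f := extension _ _ _ (psi := fun x : X => x) (fun a x => eq_refl) (fun _ => eq_refl)
             : CrHom (efree_cr X) X).
  assert (Hsec : forall x, f (efree_gen x) = x) by (intro x; apply extension_gen).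
  exists f. split.
  - intro x. exists (efree_gen x). apply Hsec.
  - exists (@efree_gen Γ X). split; [exact Hsec|].
    intros a x. symmetry. apply efree_gen_act.
Qed.

Lemma projective_class_of_retracts (Γ : Group) (Fr : CrMod Γ -> CrMod Γ)
  (E : forall X Y : CrMod Γ, CrHom X Y -> Prop)
  (lift : forall (X' X : CrMod Γ) (f : CrHom X' X), E X' X f ->
     forall (L : CrMod Γ) (h : CrHom (Fr L) X),
       exists h' : CrHom (Fr L) X', forall x, f (h' x) = h x)
  (cover : forall X, exists f : CrHom (Fr X) X, E _ _ f) :
  projective_class (fun Q => exists L, is_retract Q (Fr L)) E.
Proof.
  split; [|split].
  - intros Q [L [i [r Hri]]] X Y f Hf h.
    destruct (lift _ _ f Hf L (comp_hom h r)) as [k Hk].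
    exists (comp_hom k i). intro q. simpl. now rewrite Hk; simpl; rewrite Hri.
  - intros Q R [L [i [r Hri]]] [i' [r' Hri']].
    exists L, (comp_hom i i'), (comp_hom r' r). intro x. simpl. now rewrite Hri, Hri'.
  - intro X. exists (Fr X). split.
    + exists X, (id_hom _), (id_hom _). reflexivity.
    + apply cover.
Qed.

Theorem proposition6p2 (Γ : Group) :
  (* (a) lifting property of free crossed Γ-modules against surjections *)
  (forall (X' X : CrMod Γ) (f : CrHom X' X), surjective_hom f ->
     forall (L : CrMod Γ) (h : CrHom (free_cr L) X),
       exists h' : CrHom (free_cr L) X', forall x, f (h' x) = h x)
  /\ projective_class (fun Q : CrMod Γ => exists L : CrMod Γ, is_retract Q (free_cr L))
       (fun X Y (f : CrHom X Y) => surjective_hom f)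
  (* (b) the Γ-equivariant version *)
  /\ (forall (X' X : CrMod Γ) (f : CrHom X' X),
        surjective_hom f -> has_equivariant_section f ->
        forall (L : CrMod Γ) (h : CrHom (efree_cr L) X),
          exists h' : CrHom (efree_cr L) X', forall x, f (h' x) = h x)
  /\ projective_class (fun Q : CrMod Γ => exists L : CrMod Γ, is_retract Q (efree_cr L))
       (fun X Y (f : CrHom X Y) => surjective_hom f /\ has_equivariant_section f).
Proof.
  split; [exact (@free_lift Γ)|].
  split; [apply projective_class_of_retracts; [exact (@free_lift Γ)|apply free_cover]|].
  split; [intros X' X f _; exact (@efree_lift Γ X' X f)|].
  apply projective_class_of_retracts; [|apply efree_cover].
  intros X' X f [_ Hsec]. exact (efree_lift Hsec).
Qed.
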